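(* Let $\Gamma$ be a connected signed graph. Then all roots of the polynomial $t\mapsto\mathcal{M}(\Gamma(t))$ are real and non-negative.
   Context: A signed graph $\Gamma$ is a finite simple undirected graph with vertex set $\{1,\dots,N\}$ in which every edge $\{i,j\}$ carries a nonzero real weight $\gamma_{ij}$, which may be of either sign. For real $t$, $\Gamma(t)$ is the weighted graph with the same edges as $\Gamma$ and weights $\gamma_{ij}(t)=\gamma_{ij}$ if $\gamma_{ij}>0$ and $\gamma_{ij}(t)=t\gamma_{ij}$ if $\gamma_{ij}<0$. For a weighted graph $H$, $\mathcal{M}(H)=\sum_{T}\prod_{e\in E(T)}w_H(e)$, the sum over all spanning trees $T$ of $H$ of the product of the edge weights $w_H(e)$; thus $\mathcal{M}(\Gamma(t))$ is a polynomial in $t$. Equivalently $\mathcal{M}(H)=\frac{(-1)^{n-1}}{n}\prod_{i=2}^n\lambda_i$, where $n=|V(H)|$ and $\lambda_1=0,\lambda_2,\dots,\lambda_n$ are the eigenvalues of the Laplacian of $H$ (off-diagonal entries the weights, diagonal entries minus the row sums of the weights). *)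

From HB Require Import structures.
From mathcomp Require Import all_boot all_order all_algebra.
From mathcomp Require Import reals.
From mathcomp Require Export complex.
Set Implicit Arguments. Unset Strict Implicit. Unset Printing Implicit Defensive.
Import Order.TTheory GRing.Theory Num.Theory.
Local Open Scope ring_scope.

Section Defs.
Variable R : realType.
Variable N : nat.

(* A signed graph on vertex set 'I_N is given by a weight function w:
   edge {i,j} present iff w i j != 0, weight gamma_ij = w i j (any sign),
   w symmetric with no loops. *)
Definition signed_graph (w : 'I_N -> 'I_N -> R) : Prop :=
  (forall i j, w i j = w j i) /\ (forall i, w i i = 0).

Definition adj (w : 'I_N -> 'I_N -> R) : rel 'I_N := fun i j => w i j != 0.

Definition connected_graph (w : 'I_N -> 'I_N -> R) : Prop :=
  forall i j : 'I_N, connect (adj w) i j.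

Definition edge_set (w : 'I_N -> 'I_N -> R) (T : {set 'I_N * 'I_N}) : bool :=
  [forall e in T, (e.1 < e.2)%N && (w e.1 e.2 != 0)].

Definition tadj (T : {set 'I_N * 'I_N}) : rel 'I_N :=
  fun i j => ((i, j) \in T) || ((j, i) \in T).

Definition spans_connected (T : {set 'I_N * 'I_N}) : bool :=
  [forall i, forall j, connect (tadj T) i j].

Definition spanning_tree (w : 'I_N -> 'I_N -> R) (T : {set 'I_N * 'I_N}) : bool :=
  [&& edge_set w T, spans_connected T &
      [forall e in T, ~~ spans_connected (T :\ e)]].

Definition edge_weight_t (w : 'I_N -> 'I_N -> R) (e : 'I_N * 'I_N) : {poly R} :=
  if 0 < w e.1 e.2 then (w e.1 e.2)%:P else w e.1 e.2 *: 'X.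

Definition M_poly (w : 'I_N -> 'I_N -> R) : {poly R} :=
  \sum_(T : {set 'I_N * 'I_N} | spanning_tree w T) \prod_(e in T) edge_weight_t w e.

End Defs.

(* By the weighted matrix-tree theorem, M(Gamma(t)) at t = z is the determinant
   of the reduced Laplacian L = X D X^T, where X is the incidence matrix with the
   row of a fixed vertex deleted and D carries the weight gamma_e of each positive
   edge and z gamma_e of each negative one.  If det L = 0, a nonzero v with
   v L = 0 gives 0 = v L v^* = P + z Q, with P = sum over positive edges of
   gamma_e |(v X)_e|^2 >= 0 and Q the analogous sum over negative edges, Q <= 0.
   If Q <> 0 then z = -P/Q >= 0.  Otherwise every (v X)_e vanishes, so v, extended
   by 0 at the deleted vertex, is constant on the connected graph, i.e. v = 0.
   The matrix-tree theorem is the Cauchy-Binet expansion of det (X D X^T) together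
   with total unimodularity of X; spanning trees are recognised as the connected
   edge sets of size N - 1 by a rank argument. *)

From mathcomp Require Import all_boot all_order all_algebra all_fingroup.
From mathcomp Require Import reals complex ring.
Set Implicit Arguments. Unset Strict Implicit. Unset Printing Implicit Defensive.
Import Order.TTheory GRing.Theory Num.Theory.
Local Open Scope ring_scope.

Section SignedIncidence.
Variable F : fieldType.

Definition opt_ind m (o : option 'I_m) (i : 'I_m) : F := (o == Some i)%:R.

Lemma sum_opt_ind m (v : 'I_m -> F) o :
  \sum_i v i * opt_ind o i = if o is Some k then v k else 0.
Proof.
case: o => [k|]; last by rewrite big1 // => i _; rewrite mulr0.
rewrite (bigD1 k) //= /opt_ind eqxx mulr1 big1 ?addr0 // => i ik.
by rewrite (inj_eq Some_inj) eq_sym (negPf ik) mulr0.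
Qed.

Lemma opt_ind_unlift m (o : option 'I_m.+1) i0 (i : 'I_m) :
  opt_ind (obind (unlift i0) o) i = opt_ind o (lift i0 i).
Proof.
case: o => [k|] //; rewrite /opt_ind /=; case: unliftP => [k' ->|->] /=.
  by rewrite !(inj_eq Some_inj) (inj_eq lift_inj).
by rewrite (inj_eq Some_inj) (negPf (neq_lift _ _)).
Qed.

(* Column [j] has [1] in row [p j] and [-1] in row [q j], a [None] meaning no entry. *)
Definition signed_incidence_mx m (p q : 'I_m -> option 'I_m) : 'M[F]_m :=
  \matrix_(i, j) (opt_ind (p j) i - opt_ind (q j) i).

Lemma signed_incidence_minor m (p q : 'I_m.+1 -> option 'I_m.+1) i0 j :
  row' i0 (col' j (signed_incidence_mx p q)) =
  signed_incidence_mx (fun j' => obind (unlift i0) (p (lift j j')))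
                      (fun j' => obind (unlift i0) (q (lift j j'))).
Proof. by apply/matrixP => a b; rewrite !mxE !opt_ind_unlift. Qed.

Lemma sqr_det_signed_incidence_mx m (p q : 'I_m -> option 'I_m) :
  \det (signed_incidence_mx p q) ^+ 2 = 0 \/ \det (signed_incidence_mx p q) ^+ 2 = 1.
Proof.
elim: m p q => [|m IH] p q; first by right; rewrite det_mx00 expr1n.
set M := signed_incidence_mx p q.
have det0 : \det M = 0 -> \det M ^+ 2 = 0 by move->; rewrite expr0n.
have [j /andP[/eqP pj /eqP qj] | no_empty_col] :=
  pickP (fun j => (p j == None) && (q j == None)).
  left; apply: det0; rewrite (expand_det_col _ j) big1 // => i _.
  by rewrite mxE pj qj subrr mul0r.
have [j single | no_single_col] := pickP (fun j => (p j == None) != (q j == None)).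
  have [k [s [s2 [Mkj Mj]]]] : exists k (s : F), s ^+ 2 = 1 /\ M k j = s /\
      forall i, i != k -> M i j = 0.
    move: single; rewrite /M; case Ep: (p j) => [a|]; case Eq: (q j) => [b|] // _.
      exists a, 1; split; first exact: expr1n.
      split=> [|i ia]; rewrite mxE Ep Eq /opt_ind ?eqxx ?subr0 //.
      by rewrite (inj_eq Some_inj) eq_sym (negPf ia).
    exists b, (-1); split; first by rewrite sqrrN expr1n.
    split=> [|i ib]; rewrite mxE Ep Eq /opt_ind ?eqxx ?sub0r //.
    by rewrite (inj_eq Some_inj) eq_sym (negPf ib) oppr0.
  rewrite (expand_det_col _ j) (bigD1 k) //= big1 ?addr0 => [|i ik]; last first.
    by rewrite Mj // mul0r.
  rewrite Mkj /cofactor signed_incidence_minor !exprMn s2 -exprM mulnC exprM sqrrN.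
  by rewrite !expr1n !mul1r; apply: IH.
left; apply/det0/eqP/det0P; exists (const_mx 1).
  by apply/eqP => /rowP /(_ ord0) /eqP; rewrite !mxE oner_eq0.
apply/rowP => j; rewrite !mxE; under eq_bigr do rewrite !mxE mul1r.
move: (no_empty_col j) (no_single_col j); case: (p j) => [a|]; case: (q j) => [b|] //= _ _.
have sum1 k : \sum_i opt_ind (Some k) i = 1.
  by rewrite -(sum_opt_ind (fun=> 1) (Some k)); apply: eq_bigr => i _; rewrite mul1r.
by rewrite sumrB !sum1 subrr.
Qed.

End SignedIncidence.

Arguments opt_ind {F m}.

Lemma connect_const (T : finType) (U : eqType) (e : rel T) (x : T -> U) :
  (forall a b, e a b -> x a = x b) -> forall a b, connect e a b -> x a = x b.
Proof.
move=> He a b; have cl : closed e [pred u | x u == x a].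
  by move=> u v /He; rewrite !inE => ->.
by move/(closed_connect cl); rewrite !inE eqxx => /esym/eqP.
Qed.

Section ReducedIncidence.
Variables (F : fieldType) (n : nat).
Local Notation V := 'I_n.+1.
Local Notation K := (V * V)%type.
Local Notation r := (@ord_max n).
Local Notation iota := (lift (@ord_max n)).

Definition incid (a : 'I_n) (e : K) : F :=
  opt_ind (unlift r e.1) a - opt_ind (unlift r e.2) a.

Definition grounded (v : 'I_n -> F) (u : V) : F :=
  if unlift r u is Some a then v a else 0.

Lemma eq_grounded v v' : v =1 v' -> grounded v =1 grounded v'.
Proof. by move=> vv' u; rewrite /grounded; case: unlift. Qed.

Lemma grounded_root v : grounded v r = 0.
Proof. by rewrite /grounded unlift_none. Qed.

Lemma grounded_lift v a : grounded v (iota a) = v a.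
Proof. by rewrite /grounded liftK. Qed.

Lemma grounded_restrict (x : V -> F) u :
  x r = 0 -> grounded (fun a => x (iota a)) u = x u.
Proof. by move=> xr; rewrite /grounded; case: unliftP => [a ->|->]. Qed.

Lemma sum_incid (v : 'I_n -> F) e :
  \sum_a v a * incid a e = grounded v e.1 - grounded v e.2.
Proof. by under eq_bigr do rewrite mulrBr; rewrite sumrB !sum_opt_ind. Qed.

Definition rigid (S : {set K}) := forall x : V -> F, x r = 0 ->
  {in S, forall e, x e.1 = x e.2} -> forall u, x u = 0.

Lemma disconnected_potential S : ~~ spans_connected S ->
  exists x : V -> F, [/\ x r = 0, {in S, forall e, x e.1 = x e.2} & exists u, x u != 0].
Proof.
move=> /forallPn [a] /forallPn [b] not_ab.
have sym_conn := sym_connect_sym (fun u v : V => orbC ((u, v) \in S) ((v, u) \in S)).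
pose x u : F := (~~ connect (tadj S) r u)%:R.
exists x; split; first by rewrite /x connect0.
  move=> e eS; congr (~~ _)%:R; apply: (same_connect_r sym_conn).
  by apply: connect1; rewrite /tadj -surjective_pairing eS.
have [ra|nra] := boolP (connect (tadj S) r a); last by exists a; rewrite /x nra oner_eq0.
exists b; rewrite /x; case: (boolP (connect _ r b)) => [rb|]; last by rewrite oner_eq0.
by case/negP: not_ab; apply: connect_trans rb; rewrite sym_conn.
Qed.

Lemma rigid_spans_connected S : rigid S <-> spans_connected S.
Proof.
split=> [rigS | /forallP conn x xr xS u].
  apply/negPn/negP => /disconnected_potential [x [xr xS [u]]].
  by rewrite (rigS x xr xS u) eqxx.
rewrite -xr; symmetry; apply: (connect_const _ (forallP (conn r) u)).
by move=> a b /orP[] /xS.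
Qed.

Definition grad (v : 'rV[F]_n) (e : K) : F := grounded (v 0) e.1 - grounded (v 0) e.2.

Lemma grad_map (f : {rmorphism F -> F}) v e : grad (map_mx f v) e = f (grad v e).
Proof.
rewrite /grad rmorphB /grounded; congr (_ - _).
  by case: unlift => [a|]; rewrite ?mxE ?rmorph0.
by case: unlift => [a|]; rewrite ?mxE ?rmorph0.
Qed.

Definition edge_rows (S : {set K}) : 'M[F]_(#|S|, n) :=
  \matrix_(j, a) incid a (enum_val j).

Lemma edge_rows_mul S (c : 'cV[F]_n) j :
  (edge_rows S *m c) j 0 = grounded (fun a => c a 0) (enum_val j).1
                         - grounded (fun a => c a 0) (enum_val j).2.
Proof. by rewrite !mxE -sum_incid; apply: eq_bigr => a _; rewrite mxE mulrC. Qed.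

Lemma rigid_card S : rigid S -> (n <= #|S|)%N.
Proof.
move=> rigS; apply: leq_trans (rank_leq_row (edge_rows S)); rewrite -mxrank_tr.
suff /eqP-> : row_free (edge_rows S)^T by [].
rewrite -kermx_eq0; apply: contraT => /rowV0Pn [v /sub_kermxP vA]; apply: contraR => _.
apply/eqP/rowP => a; rewrite mxE -(grounded_lift (v 0)); apply: rigS (grounded_root _) _ _.
move=> e eS; apply/eqP; rewrite -subr_eq0.
have := congr1 (fun M : 'M[F]_(1, #|S|) => M 0 (enum_rank_in eS e)) vA.
rewrite !mxE; under eq_bigr do rewrite !mxE.
by rewrite enum_rankK_in // sum_incid => ->.
Qed.

(* A linear dependency among the edge rows makes one edge redundant. *)
Lemma rigid_drop S : rigid S -> (n < #|S|)%N -> exists2 e, e \in S & rigid (S :\ e).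
Proof.
move=> rigS n_lt_S.
have : ~~ row_free (edge_rows S).
  by apply: contraL n_lt_S => /eqP <-; rewrite -leqNgt rank_leq_col.
rewrite -kermx_eq0 => /rowV0Pn [v /sub_kermxP vA v_neq0].
have [j vj] : exists j, v 0 j != 0.
  apply/existsP; apply: contraR v_neq0 => /existsPn v0; apply/eqP/rowP => j.
  by move/negPn/eqP: (v0 j); rewrite mxE.
exists (enum_val j); first exact: enum_valP.
move=> x xr xS; pose c : 'cV[F]_n := \col_a x (iota a).
have Ac j' : (edge_rows S *m c) j' 0 = x (enum_val j').1 - x (enum_val j').2.
  have c_x : (fun a => c a 0) =1 (fun a => x (iota a)) by move=> a; rewrite mxE.
  by rewrite edge_rows_mul !(eq_grounded c_x) !grounded_restrict.
have Ac_other j' : j' != j -> (edge_rows S *m c) j' 0 = 0.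
  move=> j'j; rewrite Ac xS ?subrr // !inE enum_valP andbT.
  by apply: contra j'j => /eqP /enum_val_inj ->.
have Ac_j : (edge_rows S *m c) j 0 = 0.
  have := congr1 (fun M => (M *m c) 0 0) vA.
  rewrite -mulmxA mul0mx !mxE (bigD1 j) //= big1 ?addr0.
    by move/eqP; rewrite mulf_eq0 (negPf vj) mxE => /eqP.
  by move=> j' j'j; rewrite Ac_other // mulr0.
apply: rigS => // e eS; have [->|e_neq] := eqVneq e (enum_val j).
  by apply/eqP; rewrite -subr_eq0 -Ac Ac_j.
by apply: xS; rewrite !inE e_neq.
Qed.

Lemma grounded_connect_eq0 (e : rel V) (v : 'rV[F]_n) : (forall a b, connect e a b) ->
  (forall a b, e a b -> grounded (v 0) a = grounded (v 0) b) -> v = 0.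
Proof.
move=> conn ve; apply/rowP => a; rewrite mxE -(grounded_lift (v 0)) -(grounded_root (v 0)).
exact: connect_const ve _ _ (conn _ _).
Qed.

End ReducedIncidence.

Lemma minimal_connected_card n (S : {set 'I_n.+1 * 'I_n.+1}) : spans_connected S ->
  [forall e in S, ~~ spans_connected (S :\ e)] = (#|S| == n).
Proof.
move=> /(rigid_spans_connected rat) rigS; apply/forall_inP/eqP => [minS | cardS].
  apply/eqP; rewrite eqn_leq (rigid_card rigS) andbT leqNgt; apply/negP => /(rigid_drop rigS).
  by case=> e /minS /negP nconn /rigid_spans_connected.
move=> e eS; apply/negP => /(rigid_spans_connected rat) /rigid_card.
have := cardsD1 e S; rewrite eS cardS add1n => n_eq.
by rewrite leqNgt [X in (_ < X)%N]n_eq ltnSn.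
Qed.

Section MatrixTree.
Variables (F : fieldType) (n : nat).
Local Notation V := 'I_n.+1.
Local Notation K := (V * V)%type.
Local Notation r := (@ord_max n).
Local Notation incid := (@incid F n).

Definition reduced_laplacian (q : K -> F) : 'M[F]_n :=
  \matrix_(i, j) \sum_e incid i e * q e * incid j e.

Definition incid_mx (f : {ffun 'I_n -> K}) : 'M[F]_n :=
  signed_incidence_mx F (fun b => unlift r (f b).1) (fun b => unlift r (f b).2).

Lemma incid_mxE f a b : incid_mx f a b = incid a (f b).
Proof. by rewrite mxE. Qed.

Definition edge_image (f : {ffun 'I_n -> K}) : {set K} := [set f i | i : 'I_n].

Lemma det_reduced_laplacian_ffun q : \det (reduced_laplacian q) =
  \sum_(f : {ffun 'I_n -> K}) (\prod_i q (f i)) * ((\prod_i incid i (f i)) * \det (incid_mx f)).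
Proof.
transitivity (\sum_(s : 'S_n) \sum_(f : {ffun 'I_n -> K})
   (-1) ^+ s * \prod_i (incid i (f i) * q (f i) * incid (s i) (f i))).
  apply: eq_bigr => s _; rewrite -big_distrr /=; congr (_ * _).
  rewrite -(bigA_distr_bigA (fun i e => incid i e * q e * incid (s i) e)) /=.
  by apply: eq_bigr => i _; rewrite mxE.
rewrite exchange_big; apply: eq_bigr => f _ /=.
rewrite -det_tr mulrA big_distrr /=; apply: eq_bigr => s _.
rewrite !big_split /=.
have -> : \prod_i (incid_mx f)^T i (s i) = \prod_i incid (s i) (f i).
  by apply: eq_bigr => i _; rewrite !mxE.
by rewrite mulrCA [X in X * _ = _]mulrC.
Qed.

Lemma det_incid_mx_noninj (f : {ffun 'I_n -> K}) : ~~ injectiveb f -> \det (incid_mx f) = 0.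
Proof.
move=> /injectivePn [b1 [b2 b12 fb]]; rewrite -det_tr.
by apply: (determinant_alternate b12) => a; rewrite !mxE fb.
Qed.

Definition binet_coef (S : {set K}) :=
  \sum_(f : {ffun 'I_n -> K} | injectiveb f && (edge_image f == S))
    (\prod_i incid i (f i)) * \det (incid_mx f).

Lemma det_reduced_laplacian_binet q :
  \det (reduced_laplacian q) = \sum_(S : {set K}) (\prod_(e in S) q e) * binet_coef S.
Proof.
rewrite det_reduced_laplacian_ffun (bigID (fun f : {ffun 'I_n -> K} => injectiveb f)) /=.
rewrite [X in _ + X]big1 ?addr0 => [|f /det_incid_mx_noninj ->]; last by rewrite !mulr0.
rewrite (partition_big edge_image xpredT) //=; apply: eq_bigr => S _.
rewrite /binet_coef big_distrr /=; apply: eq_bigr => f /andP [/injectiveP f_inj /eqP <-].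
by rewrite big_imset //= => x y _ _ /f_inj.
Qed.

Lemma card_edge_image (f : {ffun 'I_n -> K}) : injective f -> #|edge_image f| = n.
Proof. by move=> f_inj; rewrite card_imset // card_ord. Qed.

Lemma edge_image_sub_eq (f f0 : {ffun 'I_n -> K}) : injective f -> injective f0 ->
  edge_image f \subset edge_image f0 -> edge_image f = edge_image f0.
Proof.
move=> f_inj f0_inj sub; apply/eqP.
by rewrite eqEcard sub (card_edge_image f_inj) (card_edge_image f0_inj) leqnn.
Qed.

Lemma edge_image_enum (S : {set K}) : #|S| = n ->
  exists2 f : {ffun 'I_n -> K}, injective f & edge_image f = S.
Proof.
move=> cardS; pose f := [ffun i => enum_val (cast_ord (esym cardS) i)].
have f_inj : injective f by move=> a b; rewrite !ffunE => /enum_val_inj /cast_ord_inj.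
exists f => //; apply/eqP; rewrite eqEcard card_edge_image // cardS leqnn andbT.
by apply/subsetP => e /imsetP [i _ ->]; rewrite ffunE enum_valP.
Qed.

Lemma edge_image_perm (f0 f : {ffun 'I_n -> K}) : injective f ->
  edge_image f = edge_image f0 -> exists s : 'S_n, f = [ffun i => f0 (s i)].
Proof.
move=> f_inj im_f.
have /fin_all_exists [g fg] : forall i, exists j, f0 j = f i.
  move=> i; have : f i \in edge_image f0 by rewrite -im_f imset_f.
  by case/imsetP=> j _ ->; exists j.
have g_inj : injective g by move=> a b gab; apply: f_inj; rewrite -!fg gab.
by exists (perm g_inj); apply/ffunP => i; rewrite !ffunE permE fg.
Qed.

(* Only the reorderings of one enumeration [f0] of the edge set contribute. *)
Lemma binet_coefE (f0 : {ffun 'I_n -> K}) : injective f0 ->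
  binet_coef (edge_image f0) = \det (incid_mx f0) ^+ 2.
Proof.
move=> f0_inj; pose h (s : 'S_n) := [ffun i => f0 (s i)].
have h_inj : injective h.
  move=> s t /ffunP hst; apply/permP => i; apply: f0_inj.
  by have := hst i; rewrite !ffunE.
have hs_inj s : injective (h s) by move=> a b; rewrite !ffunE => /f0_inj /perm_inj.
rewrite /binet_coef (eq_bigl (mem [set h s | s : 'S_n])) => [|f]; last first.
  apply/andP/imsetP => [[/injectiveP f_inj /eqP /edge_image_perm] | [s _ ->]].
    by case=> // s ->; exists s.
  split; first exact/injectiveP.
  apply/eqP/edge_image_sub_eq => //; apply/subsetP => e /imsetP [i _ ->].
  by rewrite ffunE imset_f.
rewrite big_imset /=; last by move=> s t _ _ /h_inj.
have det_h s : \det (incid_mx (h s)) = (-1) ^+ s * \det (incid_mx f0).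
  have -> : incid_mx (h s) = col_perm s (incid_mx f0).
    by apply/matrixP => a b; rewrite !mxE ffunE.
  by rewrite col_permE det_mulmx det_perm odd_permV mulrC.
rewrite expr2 {3}/determinant big_distrr /=; apply: eq_bigr => s _.
have -> : \prod_i incid i (h s i) = \prod_i incid_mx f0 i (s i).
  by apply: eq_bigr => i _; rewrite incid_mxE ffunE.
by rewrite det_h mulrCA [RHS]mulrCA [_ * \det _]mulrC.
Qed.

Lemma incid_mx_mul f (v : 'rV[F]_n) b : (v *m incid_mx f) 0 b = grad v (f b).
Proof. by rewrite !mxE /grad -sum_incid; apply: eq_bigr => a _; rewrite mxE. Qed.

Lemma det_incid_mx_eq0 f :
  (\det (incid_mx f) == 0) = ~~ spans_connected (edge_image f).
Proof.
apply/det0P/negP => [[v v_neq0 vM] /(rigid_spans_connected F) rigS | /negP].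
  case/eqP: v_neq0; apply/rowP => a; rewrite mxE -(grounded_lift (v 0)).
  apply: rigS (grounded_root _) _ _ => e /imsetP [b _ ->]; apply/eqP.
  by rewrite -subr_eq0 -[_ - _]/(grad v (f b)) -incid_mx_mul vM mxE.
move=> /(disconnected_potential F) [x [xr xS [u xu]]].
have x_row : (fun a => (\row_a x (lift r a)) 0 a) =1 (fun a => x (lift r a)).
  by move=> a; rewrite mxE.
exists (\row_a x (lift r a)).
  apply: contra xu => /eqP x0; rewrite -grounded_restrict // -(eq_grounded x_row).
  by rewrite x0 /grounded; case: unlift => // a; rewrite mxE.
apply/rowP => b; rewrite incid_mx_mul /grad !(eq_grounded x_row) !grounded_restrict //.
by rewrite xS ?subrr ?mxE // imset_f.
Qed.

Lemma matrix_tree (E : pred K) (q : K -> F) : (forall e, q e != 0 -> E e) ->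
  \det (reduced_laplacian q) = \sum_(S : {set K} | [&& [forall e in S, E e],
       spans_connected S & #|S| == n]) \prod_(e in S) q e.
Proof.
move=> qE; rewrite det_reduced_laplacian_binet [RHS]big_mkcond; apply: eq_bigr => S _.
have [SE|] /= := boolP [forall e in S, E e]; last first.
  case/forall_inPn => e eS /negP nEe; rewrite (bigD1 e) //=.
  by move/contra_not_eq: (qE e) => /(_ nEe) ->; rewrite !mul0r.
have [/eqP cardS|cardS] := boolP (#|S| == n); last first.
  rewrite andbF /binet_coef [X in _ * X]big_pred0 ?mulr0 // => f.
  apply/negbTE/negP => /andP [/injectiveP f_inj /eqP imS].
  by move: cardS; rewrite -imS card_edge_image ?eqxx.
have [f0 f0_inj <-] := edge_image_enum cardS.
rewrite binet_coefE // andbT -[spans_connected _]negbK -det_incid_mx_eq0.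
have [->|det_neq0] /= := eqVneq (\det (incid_mx f0)) 0; first by rewrite expr0n mulr0.
have [|->] := sqr_det_signed_incidence_mx F (fun b => unlift r (f0 b).1)
                                            (fun b => unlift r (f0 b).2).
  by move/eqP; rewrite sqrf_eq0 (negPf det_neq0).
by rewrite mulr1.
Qed.

Lemma laplacian_form q (v u : 'rV[F]_n) :
  \sum_j (v *m reduced_laplacian q) 0 j * u 0 j = \sum_e q e * (grad v e * grad u e).
Proof.
transitivity (\sum_j \sum_i \sum_e q e * ((v 0 i * incid i e) * (u 0 j * incid j e))).
  apply: eq_bigr => j _; rewrite mxE big_distrl; apply: eq_bigr => i _ /=.
  by rewrite mxE big_distrr big_distrl; apply: eq_bigr => e _ /=; ring.
rewrite exchange_big; under eq_bigr do rewrite exchange_big.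
rewrite exchange_big; apply: eq_bigr => e _ /=.
rewrite /grad -!sum_incid mulr_suml mulr_sumr; apply: eq_bigr => i _.
by rewrite !mulr_sumr; apply: eq_bigr => j _.
Qed.

End MatrixTree.

Definition weight_at (C : numDomainType) (a z : C) : C := if 0 < a then a else a * z.

Lemma weighted_form_root (C : numFieldType) (I : finType) (a m : I -> C) (z : C) :
  (forall i, a i \is Num.real) -> (forall i, 0 <= m i) ->
  \sum_i weight_at (a i) z * m i = 0 -> 0 <= z \/ forall i, a i * m i = 0.
Proof.
move=> a_real m_ge0.
pose P := \sum_(i | 0 < a i) a i * m i.
pose Q := \sum_(i | ~~ (0 < a i)) - (a i * m i).
have P_ge0 i : 0 < a i -> 0 <= a i * m i by move/ltW/mulr_ge0; apply.
have Q_ge0 i : ~~ (0 < a i) -> 0 <= - (a i * m i).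
  rewrite -real_leNgt ?real0 // -mulNr -oppr_ge0 => a_le0.
  by apply: mulr_ge0.
have -> : \sum_i weight_at (a i) z * m i = P - Q * z.
  rewrite /Q sumrN mulNr opprK mulr_suml (bigID (fun i => 0 < a i)) /=.
  congr (_ + _); apply: eq_bigr => i; rewrite /weight_at.
    by move=> ->.
  by move=> /negPf ->; rewrite mulrAC.
move/eqP; rewrite subr_eq0 => /eqP PQ.
have [Q0|Q_neq0] := eqVneq Q 0; [right => i | left].
  have P0 : P = 0 by rewrite PQ Q0 mul0r.
  have [ai|ai] := boolP (0 < a i); first exact: (psumr_eq0P P_ge0 P0).
  by apply/eqP; rewrite -oppr_eq0; apply/eqP; exact: (psumr_eq0P Q_ge0 Q0).
have Q_gt0 : 0 < Q by rewrite lt_def Q_neq0 sumr_ge0.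
by rewrite -(pmulr_rge0 _ Q_gt0) -PQ sumr_ge0.
Qed.

Lemma ge0_Im_Re (C : numClosedFieldType) (z : C) : 0 <= z -> 'Im z = 0 /\ 0 <= 'Re z.
Proof.
move=> z_ge0; have z_real := ger0_real z_ge0.
by rewrite (Creal_ReP _ z_real); split=> //; apply/Creal_ImP.
Qed.

Lemma M_poly_ord0 (R : realType) (w : 'I_0 -> 'I_0 -> R) : M_poly w = 1.
Proof.
rewrite /M_poly (big_pred1 set0) ?big_set0 // => T.
have -> : T = set0 by apply/setP => -[[]].
rewrite /= eqxx /spanning_tree /edge_set /spans_connected.
by apply/and3P; split; apply/forallP => -[[]].
Qed.

Local Open Scope complex_scope.

Section SignedGraph.
Variables (R : realType) (n : nat) (w : 'I_n.+1 -> 'I_n.+1 -> R).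

Definition is_edge (e : 'I_n.+1 * 'I_n.+1) : bool := (e.1 < e.2)%N && (w e.1 e.2 != 0).

Lemma spanning_treeE T : spanning_tree w T =
  [&& [forall e in T, is_edge e], spans_connected T & #|T| == n].
Proof.
rewrite /spanning_tree; have [conn|] := boolP (spans_connected T); last by rewrite !andbF.
by rewrite minimal_connected_card.
Qed.

Definition edge_coef (e : 'I_n.+1 * 'I_n.+1) : R[i] :=
  if is_edge e then (w e.1 e.2)%:C else 0.

Lemma horner_edge_weight_t e z :
  (map_poly (fun x : R => x%:C) (edge_weight_t w e)).[z] = weight_at (w e.1 e.2)%:C z.
Proof.
rewrite /edge_weight_t /weight_at -[0 : R[i]]/(0%:C) ltcR.
case: ifP => _; first by rewrite map_polyC hornerC.
by rewrite map_polyZ map_polyX hornerZ hornerX.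
Qed.

Lemma horner_M_poly z : (map_poly (fun x : R => x%:C) (M_poly w)).[z] =
  \det (reduced_laplacian (fun e => weight_at (edge_coef e) z)).
Proof.
rewrite (@matrix_tree _ _ is_edge) => [|e]; last first.
  by rewrite /edge_coef /weight_at; case: is_edge; rewrite // ltxx mul0r eqxx.
rewrite /M_poly rmorph_sum horner_sum.
apply: eq_big => [T | T /and3P [/forall_inP T_edges _ _]]; first exact: spanning_treeE.
rewrite rmorph_prod horner_prod; apply: eq_bigr => e /T_edges e_edge.
by rewrite horner_edge_weight_t /edge_coef ifT.
Qed.

Lemma edge_grad_eq0 (F : fieldType) (v : 'rV[F]_n) :
  signed_graph w -> connected_graph w -> (forall e, is_edge e -> grad v e = 0) -> v = 0.
Proof.
move=> [w_sym w_diag] w_conn grad0; apply: (grounded_connect_eq0 w_conn) => a b w_ab.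
have [ab|ba|/val_inj ab] := ltngtP a b.
- by apply/eqP; rewrite -subr_eq0 -[_ - _]/(grad v (a, b)) grad0 // /is_edge ab.
- by apply/esym/eqP; rewrite -subr_eq0 -[_ - _]/(grad v (b, a)) grad0 // /is_edge ba w_sym.
- by move: w_ab; rewrite /adj ab w_diag eqxx.
Qed.

End SignedGraph.

Theorem mainTheorem4 (R : realType) (N : nat) (w : 'I_N -> 'I_N -> R) :
  signed_graph w -> connected_graph w ->
  forall z : R[i], root (map_poly (fun x : R => x%:C) (M_poly w)) z ->
    Im z = 0 /\ 0 <= Re z.
Proof.
case: N w => [|n] w w_signed w_conn z.
  by rewrite M_poly_ord0 rmorph1 /root hornerC oner_eq0.
rewrite /root horner_M_poly => /det0P [v v_neq0 vL].
have := laplacian_form (fun e => weight_at (edge_coef w e) z) v (map_mx Num.conj v).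
rewrite vL big1 => [/esym|j _]; last by rewrite mxE mul0r.
under eq_bigr do rewrite grad_map.
case/weighted_form_root => [e | e | /ge0_Im_Re // | edge0].
- by apply/complex_realP; rewrite /edge_coef; case: ifP; eexists.
- exact: mul_conjC_ge0.
case/eqP: v_neq0; apply: (edge_grad_eq0 w_signed w_conn) => e e_edge.
move: (edge0 e); rewrite /edge_coef e_edge => /eqP.
rewrite mulf_eq0 fmorph_eq0 mul_conjC_eq0 => /orP [w0|/eqP //].
by case/andP: e_edge => _; rewrite w0.
Qed.
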